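(* Let $t'$ be a feasible type report profile, let buyer $m$ be the winner under efficient allocation, and let $LCC_m=(l_1,l_2,\dots,l_q=m)$. Let $l_i\in LCC_m$ be an intermediate node. If, when $l_i$'s report changes from $r'_{l_i}$ to $r'_{l_i}\setminus {r^*_{l_i}}'$, the winner under efficient allocation becomes a buyer $m'\ne m$, then $\{l_{i+1},l_{i+2},\dots,l_q\}\cap LCC_{m'}=\emptyset$, where $LCC_{m'}$ is the lowest-cost trading chain to $m'$ under the modified profile.
   Context: Setting. A seller $s$ sells one indivisible commodity. Besides $s$, there is a set $N$ of agents, each either a buyer or an intermediate node. Each buyer $i$ reports a bid $b'_i\ge 0$. Each intermediate node $i$ has a neighbour set $r_i\subseteq N$, reports $r'_i\subseteq r_i$ (the agents to whom she passes the sale information), and has a publicly known cost $c_i$ incurred if a trade passes through her. Buyers have no links among themselves. Initially only the seller's neighbours $r_s$ know of the sale. A trading chain from $s$ to $i$ under reports $t'$ is a simple path $(a_1,\dots,a_p,i)$ with $a_1\in r_s$, $a_l\in r'_{a_{l-1}}$ for $1<l\le p$, $i\in r'_{a_p}$. A report profile is feasible if exactly the agents reachable from $s$ by trading chains (following the others' reports) participate; when an agent changes her report the others' profile adjusts to stay feasible. $LCC_i$ is a trading chain from $s$ to $i$ minimizing the total cost of the intermediate nodes on it other than $i$. For a buyer $i$, $SW_i=b'_i-\sum_{j\in LCC_i\setminus\{i\}}c_j$. The winner under efficient allocation is $m=\arg\max_i SW_i$, and the item is traded along $LCC_m$. Threshold neighbourhood. For an intermediate node $i$, ${r_i^*}'$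 is a minimum-cardinality subset $r''\subseteq r'_i$ such that, when $i$ reports $r'_i\setminus r''$ instead of $r'_i$, the winner under efficient allocation changes to a buyer other than $m$; if no such subset exists, ${r_i^*}'=r'_i$. *)

From mathcomp Require Import all_boot all_order all_algebra.
Set Implicit Arguments. Unset Strict Implicit. Unset Printing Implicit Defensive.
Import Order.TTheory GRing.Theory Num.Theory.
Local Open Scope ring_scope.

(* Agents N are the elements of the finite type V; the seller s is not an
   element of V and is represented only through her neighbour set rs.
   [buyer] marks buyers; the other agents are intermediate nodes.
   A neighbour-report profile is [rep : V -> {set V}]; only intermediate
   nodes pass on information (buyers have no outgoing links). *)

Section Network.
Variables (V : finType) (R : realDomainType).
Variable buyer : pred V.
Variable rs : {set V}.

Definition edge (rep : V -> {set V}) : rel V :=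
  fun x y => ~~ buyer x && (y \in rep x).

Definition trading_chain (rep : V -> {set V}) (p : seq V) (i : V) : bool :=
  match p with
  | [::] => false
  | x :: q => [&& uniq p, x \in rs, path (edge rep) x q & last x q == i]
  end.

Definition chain_cost (c : V -> R) (p : seq V) (i : V) : R :=
  \sum_(j <- p | j != i) c j.

Definition is_LCC (rep : V -> {set V}) (c : V -> R) (p : seq V) (i : V) : Prop :=
  trading_chain rep p i /\
  forall q, trading_chain rep q i -> chain_cost c p i <= chain_cost c q i.

Definition SW (b c : V -> R) (p : seq V) (i : V) : R := b i - chain_cost c p i.

Definition is_winner (rep : V -> {set V}) (b c : V -> R) (prio : V -> nat)
  (m : V) : Prop :=
  buyer m /\ exists pm, is_LCC rep c pm m /\
    forall j pj, buyer j -> j != m -> is_LCC rep c pj j ->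
      SW b c pj j < SW b c pm m \/
      (SW b c pj j = SW b c pm m /\ (prio m < prio j)%N).

Definition upd (rep : V -> {set V}) (i : V) (S : {set V}) : V -> {set V} :=
  fun j => if j == i then S else rep j.

Definition changes_winner (rep : V -> {set V}) (b c : V -> R) (prio : V -> nat)
  (i m : V) (r'' : {set V}) : Prop :=
  r'' \subset rep i /\
  exists m', m' != m /\ is_winner (upd rep i (rep i :\: r'')) b c prio m'.

Definition is_threshold (rep : V -> {set V}) (b c : V -> R) (prio : V -> nat)
  (i m : V) (rstar : {set V}) : Prop :=
  (changes_winner rep b c prio i m rstar /\
     forall r'', changes_winner rep b c prio i m r'' -> (#|rstar| <= #|r''|)%N)
  \/ ((forall r'', ~ changes_winner rep b c prio i m r'') /\ rstar = rep i).

End Network.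

From mathcomp Require Import all_boot all_order all_algebra.
From mathcomp Require Import lra.

Set Implicit Arguments.
Unset Strict Implicit.
Unset Printing Implicit Defensive.

Import Order.TTheory GRing.Theory Num.Theory.
Local Open Scope ring_scope.

(* Suppose an agent y after l_i on LCC_m also lies on LCC_m', and split both
   chains at y: LCC_m = l ++ y :: s with l_i in l, and LCC_m' = l' ++ y :: s'.
   As l_i does not occur in y :: s, the walk l' ++ y :: s still reaches m
   after l_i's deviation, and l ++ y :: s' reaches m' before it (the deviation
   only removes links).  The prefixes consist of intermediate nodes, so the
   two crossed walks, once shortened to chains, cost at most as much as LCC_m
   and LCC_m' together.  Then m beating m' before the deviation and m' beating
   m after it add up to 0 < 0, or, with ties on both sides, to
   prio m < prio m' < prio m. *)

Lemma sumr_uniq_sub (R : numDomainType) (I : eqType) (s t : seq I) (F : I -> R) :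
  uniq s -> {subset s <= t} -> {in t, forall i, 0 <= F i} ->
  \sum_(i <- s) F i <= \sum_(i <- t) F i.
Proof.
elim: t s => [|a t IH] s us sst F_ge0.
  by case: s us sst => // x s _ /(_ x); rewrite mem_head => /(_ isT).
have F_ge0t : {in t, forall i, 0 <= F i} by move=> i it; rewrite F_ge0 // inE it orbT.
rewrite big_cons; case: (boolP (a \in s)) => [as_|/negP nas].
  rewrite (perm_big _ (perm_to_rem as_)) big_cons lerD2l.
  apply: IH (rem_uniq _ us) _ F_ge0t => i.
  rewrite (mem_rem_uniq _ us) inE => /andP [ia /sst].
  by rewrite inE (negbTE ia).
rewrite -[X in X <= _]add0r lerD ?F_ge0 ?mem_head // IH // => i it.
by have := sst i it; rewrite inE => /predU1P [ia|//]; case: nas; rewrite -ia.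
Qed.

Lemma exists_arg_min_seq d (X : orderType d) (T : choiceType) (s : seq T)
    (P : pred T) (F : T -> X) x0 :
  x0 \in s -> P x0 ->
  exists2 x, (x \in s) && P x & forall y, y \in s -> P y -> (F x <= F y)%O.
Proof.
move=> x0s Px0.
have [[x xs] /= Px minx] := @arg_minP _ _ _ (SeqSub x0s)
  (fun i => P (val i)) (fun i => F (val i)) Px0.
by exists x; [rewrite xs Px | move=> y ys Py; exact: minx (SeqSub ys) Py].
Qed.

Lemma uniq_mem_perms_subsets (T : finType) (s : seq T) :
  uniq s -> s \in flatten [seq permutations (enum A) | A : {set T}].
Proof.
move=> us; apply/flattenP; exists (permutations (enum [set x in s])).
  exact: image_f.
rewrite mem_permutations uniq_perm ?enum_uniq // => x.
by rewrite mem_enum inE.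
Qed.

Lemma mem_split (T : eqType) (s : seq T) x : x \in s -> exists s1 s2, s = s1 ++ x :: s2.
Proof. by case/splitPr=> s1 s2; exists s1, s2. Qed.

Lemma mem_drop_split (T : eqType) (s : seq T) x0 k y : (k < size s)%N ->
  y \in drop k.+1 s -> exists l r, s = l ++ y :: r /\ nth x0 s k \in l.
Proof.
move=> ks /mem_split [d [r Ed]]; exists (take k.+1 s ++ d), r.
split; first by rewrite -catA -Ed cat_take_drop.
by rewrite mem_cat -(nth_take _ (ltnSn k)) mem_nth // size_take_min leq_min leqnn ks.
Qed.

Section TradingNetwork.
Variables (V : finType) (R : realDomainType) (buyer : pred V) (rs : {set V}).
Implicit Types (S : {set V}) (rep : V -> {set V}) (b c : V -> R) (prio : V -> nat).

Definition walk rep (p : seq V) : bool :=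
  if p is x :: q then (x \in rs) && path (edge buyer rep) x q else false.

Lemma trading_chainE rep p j :
  trading_chain buyer rs rep p j = [&& uniq p, walk rep p & last j p == j].
Proof. by case: p => //= x q; rewrite !andbA. Qed.

Lemma walk_cat rep l y r :
  walk rep (l ++ y :: r) = walk rep (rcons l y) && path (edge buyer rep) y r.
Proof.
by case: l => [|x l] /=; rewrite ?andbT // cat_path rcons_path /= !andbA.
Qed.

Lemma trading_chain_cat rep l y r j :
  trading_chain buyer rs rep (l ++ y :: r) j =
  [&& uniq (l ++ y :: r), walk rep (rcons l y), path (edge buyer rep) y r
    & last y r == j].
Proof. by rewrite trading_chainE walk_cat last_cat /= !andbA. Qed.

Lemma path_edge_nonbuyer rep x s :
  path (edge buyer rep) x s -> {in belast x s, forall z, ~~ buyer z}.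
Proof.
elim: s x => //= y s IH x /andP [/andP [bx _] ps] z.
by rewrite inE => /predU1P [->|]; [|exact: IH].
Qed.

Lemma walk_rcons_nonbuyer rep l y :
  walk rep (rcons l y) -> {in l, forall z, ~~ buyer z}.
Proof.
case: l => [|x l] //= /andP [_ /path_edge_nonbuyer].
by rewrite belast_rcons.
Qed.

Lemma walk_shorten rep c p j : (forall z, ~~ buyer z -> 0 <= c z) ->
  walk rep p -> last j p = j ->
  exists2 q, trading_chain buyer rs rep q j & chain_cost c q j <= chain_cost c p j.
Proof.
case: p => [|x s] // c_ge0 /= /andP [xrs ps] <-.
have s_nb z : z \in x :: s -> z != last x s -> ~~ buyer z.
  rewrite lastI mem_rcons inE => /predU1P [-> /eqP //|zs _].
  exact: path_edge_nonbuyer ps z zs.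
case/shortenP: ps s_nb => s' ps' us' s's s_nb.
exists (x :: s'); first by rewrite /trading_chain us' xrs ps' eqxx.
rewrite /chain_cost !(big_mkcond (fun z => z != _)).
apply: sumr_uniq_sub => // [z|z zs].
  by rewrite !inE => /predU1P [->|/s's ->]; rewrite ?eqxx ?orbT.
by case: ifP => // zl; apply/c_ge0/s_nb.
Qed.

Lemma chain_cost_cat_nonbuyer c l s j : {in l, forall z, ~~ buyer z} -> buyer j ->
  chain_cost c (l ++ s) j = \sum_(z <- l) c z + chain_cost c s j.
Proof.
move=> l_nb bj; rewrite /chain_cost big_cat /=; congr (_ + _).
rewrite big_seq_cond [RHS]big_seq; apply: eq_bigl => z.
by case: (boolP (z \in l)) => //= /l_nb; apply: contraNneq => ->.
Qed.

Lemma splice_chain rep c l y r j : (forall z, ~~ buyer z -> 0 <= c z) ->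
  walk rep (rcons l y) -> path (edge buyer rep) y r -> last y r = j -> buyer j ->
  exists2 q, trading_chain buyer rs rep q j &
    chain_cost c q j <= \sum_(z <- l) c z + chain_cost c (y :: r) j.
Proof.
move=> c_ge0 wl pr lr bj.
rewrite -(chain_cost_cat_nonbuyer c _ (walk_rcons_nonbuyer wl) bj).
by apply: walk_shorten; rewrite ?walk_cat ?wl ?pr // last_cat.
Qed.

Lemma edge_upd_sub rep i S : S \subset rep i ->
  subrel (edge buyer (upd rep i S)) (edge buyer rep).
Proof.
move=> Ssub x y; rewrite /edge /upd; case: eqP => [->|//].
by move=> /andP [-> /(subsetP Ssub)].
Qed.

Lemma path_upd_notin rep i S x s : i \notin x :: s ->
  path (edge buyer rep) x s -> path (edge buyer (upd rep i S)) x s.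
Proof.
move=> inotin; apply: (sub_in_path (P := predC1 i)); last first.
  by apply/allP => z zs; apply: contraNneq inotin => <-.
by move=> u v /= ui _; rewrite /edge /upd (negbTE ui).
Qed.

Lemma LCC_exists rep c q j : trading_chain buyer rs rep q j ->
  exists p, is_LCC buyer rs rep c p j.
Proof.
have chain_uniq p : trading_chain buyer rs rep p j -> uniq p.
  by case: p => // x s /and4P [].
move=> tq; have [p /andP [_ tp] p_min] :=
  exists_arg_min_seq (P := trading_chain buyer rs rep ^~ j) (chain_cost c ^~ j)
    (uniq_mem_perms_subsets (chain_uniq q tq)) tq.
exists p; split=> // p' tp'.
exact: p_min (uniq_mem_perms_subsets (chain_uniq p' tp')) tp'.
Qed.

Lemma LCC_cost_eq rep c p p' j :
  is_LCC buyer rs rep c p j -> is_LCC buyer rs rep c p' j ->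
  chain_cost c p j = chain_cost c p' j.
Proof. by move=> [tp p_min] [tp' p'_min]; apply/le_anti; rewrite p_min ?p'_min. Qed.

Lemma winner_dominates rep b c prio m pm j q :
  is_winner buyer rs rep b c prio m -> is_LCC buyer rs rep c pm m ->
  buyer j -> j != m -> trading_chain buyer rs rep q j ->
  SW b c q j < SW b c pm m \/ (SW b c q j <= SW b c pm m /\ (prio m < prio j)%N).
Proof.
move=> [_ [pm0 [pm0_LCC m_best]]] pm_LCC bj jm tq.
have [pj [tj pj_min]] := LCC_exists c tq.
have pj_le := pj_min q tq.
have := m_best j pj bj jm (conj tj pj_min).
rewrite /SW -(LCC_cost_eq pm0_LCC pm_LCC) => -[lt_SW|[eq_SW lt_prio]].
- by left; lra.
- by right; split=> //; lra.
Qed.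

Lemma winners_exchange_cost rep rep' b c prio m m' pm pm' q q' :
  is_winner buyer rs rep b c prio m -> is_LCC buyer rs rep c pm m ->
  is_winner buyer rs rep' b c prio m' -> is_LCC buyer rs rep' c pm' m' ->
  m' != m -> trading_chain buyer rs rep q m' -> trading_chain buyer rs rep' q' m ->
  chain_cost c pm m + chain_cost c pm' m' < chain_cost c q m' + chain_cost c q' m.
Proof.
move=> m_win pm_LCC m'_win pm'_LCC m'm tq tq'.
have mm' : m != m' by rewrite eq_sym.
have := winner_dominates m_win pm_LCC m'_win.1 m'm tq.
have := winner_dominates m'_win pm'_LCC m_win.1 mm' tq'.
rewrite /SW => -[lt1|[le1 prio1]] [lt2|[le2 prio2]]; try lra.
by have := ltn_trans prio1 prio2; rewrite ltnn.
Qed.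

End TradingNetwork.

Theorem lemma1 (V : finType) (R : realDomainType) (buyer : pred V)
  (rs : {set V}) (r rep : V -> {set V}) (b c : V -> R) (prio : V -> nat)
  (prio_inj : injective prio)
  (b_ge0 : forall i, buyer i -> 0 <= b i)
  (c_ge0 : forall i, ~~ buyer i -> 0 <= c i)
  (rep_sub : forall i, rep i \subset r i)
  (m : V) (hm : is_winner buyer rs rep b c prio m)
  (pm : seq V) (hpm : is_LCC buyer rs rep c pm m)
  (k : nat) (hk : (k < (size pm).-1)%N)
  (rstar : {set V})
  (hth : is_threshold buyer rs rep b c prio (nth m pm k) m rstar)
  (m' : V) (hm'm : m' != m)
  (hm' : is_winner buyer rs (upd rep (nth m pm k) (rep (nth m pm k) :\: rstar))
           b c prio m')
  (pm' : seq V)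
  (hpm' : is_LCC buyer rs (upd rep (nth m pm k) (rep (nth m pm k) :\: rstar))
            c pm' m') :
  [set x in drop k.+1 pm] :&: [set x in pm'] = set0.
Proof.
(* Only the removal of [rstar] from l_i's report matters, not its minimality. *)
set i := nth m pm k in hm' hpm' *; set rep' := upd rep i _ in hm' hpm' *.
apply/setP => y; rewrite !inE; apply/negbTE/andP => -[y_after y_pm'].
have [l [s [Epm i_l]]] := mem_drop_split m (leq_trans hk (leq_pred _)) y_after.
have [l' [s' Epm']] := mem_split y_pm'.
have := hpm.1; rewrite Epm trading_chain_cat => /and4P [upm walk_l path_s /eqP last_s].
have := hpm'.1; rewrite Epm' trading_chain_cat => /and4P [_ walk_l' path_s' /eqP last_s'].
have i_notin_s : i \notin y :: s.
  move: upm; rewrite cat_uniq => /and3P [_ /hasPn disj _].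
  by apply/negP => /disj; rewrite i_l.
have [bm bm'] := (hm.1, hm'.1).
have [q' tq' cost_q'] : exists2 q', trading_chain buyer rs rep' q' m &
    chain_cost c q' m <= \sum_(z <- l') c z + chain_cost c (y :: s) m.
  exact: splice_chain c_ge0 walk_l' (path_upd_notin _ i_notin_s path_s) last_s bm.
have [q tq cost_q] : exists2 q, trading_chain buyer rs rep q m' &
    chain_cost c q m' <= \sum_(z <- l) c z + chain_cost c (y :: s') m'.
  have path_s'_rep := sub_path (edge_upd_sub (subsetDl _ _)) path_s'.
  exact: splice_chain c_ge0 walk_l path_s'_rep last_s' bm'.
have := winners_exchange_cost hm hpm hm' hpm' hm'm tq tq'.
rewrite Epm Epm' (chain_cost_cat_nonbuyer c _ (walk_rcons_nonbuyer walk_l) bm).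
by rewrite (chain_cost_cat_nonbuyer c _ (walk_rcons_nonbuyer walk_l') bm'); lra.
Qed.
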